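(* Let $d\ge0$, and consider the Gaussian broadcast model on $P=\mathbb Z_{\ge0}^{d+1}$ in the critical case $\alpha_i=1/i$ for all $i\in[d+1]$. Fix $t\ge0$ and reals $c_u\ge0$ ($u\in L_t$) with $\sum_{u\in L_t}c_u=1$, and let $\zeta=\sum_{u\in L_t}c_uX_u$. Let $\Gamma$ be the random chain that starts at $u\in L_t$ with probability $c_u$ and, at each step, moves from its current vertex $x\ne\mathbf 0$ to an element of $\mathfrak p(x)$ chosen uniformly at random (independently of previous steps), stopping when it reaches $\mathbf 0$. For $w\in P$ write $\mathbb P(w\in\Gamma)$ for the probability that $\Gamma$ visits $w$. Then $$\operatorname{Var}(\zeta)\ge\frac1{d+1}\sum_{w\in P}\mathbb P(w\in\Gamma)^2.$$
   Context: Gaussian broadcast model on the finite model: $P=\mathbb{Z}_{\ge0}^{d+1}$ with $u\le v$ iff $v-u\in\mathbb{Z}_{\ge0}^{d+1}$; $L_t$ = tuples with coordinate sum $t$; $\mathfrak p(v)$ = set of elements covered by $v$ (the vectors $v-e_i$ with $v_i>0$), so $|\mathfrak p(v)|$ is the number of positive coordinates; $\mathbf 0$ is the minimal element. Let $X_0\sim\mathcal N(0,1)$, independently i.i.d. $W_{u\to v}\sim\mathcal N(0,1)$ for covering pairs $u\lessdot v$, $X_{\mathbf 0}=X_0$, and $X_v=\alpha_{|\mathfrak p(v)|}\sum_{u\in\mathfrak p(v)}(X_u+W_{u\to v})$ for $v\ne\mathbf 0$. *)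

From mathcomp Require Import all_boot all_order all_algebra.
Set Implicit Arguments. Unset Strict Implicit. Unset Printing Implicit Defensive.
Import Order.TTheory GRing.Theory Num.Theory.
Local Open Scope ring_scope.

Definition vtx (d : nat) := {ffun 'I_d.+1 -> nat}.

Definition lvl d (v : vtx d) : nat := (\sum_i v i)%N.

Definition dec d (v : vtx d) (i : 'I_d.+1) : vtx d :=
  [ffun j => if j == i then (v j).-1 else v j].

Definition parents d (v : vtx d) : seq (vtx d) :=
  [seq dec v i | i <- enum 'I_d.+1 & (0 < v i)%N].

(* L_s, enumerated as a (duplicate-free) list: the vectors with coordinate sum s
   (all coordinates are then <= s). *)
Definition levelset d (s : nat) : seq (vtx d) :=
  [seq [ffun i => nat_of_ord (f i)] : vtx d | f : {ffun 'I_d.+1 -> 'I_s.+1} <-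
     enum [set: {ffun 'I_d.+1 -> 'I_s.+1}] & (\sum_i nat_of_ord (f i) == s)%N].

(* ---------- The Gaussian model ----------
   The independent standard Gaussian sources are X_0 (index None) and
   W_{u->v} (index Some (u,v)) for covering pairs u <. v.  Every X_v is a
   (finite) linear combination of the sources; we represent a centred Gaussian
   variable of this linear span by its coefficient function src d -> R. *)
Definition src d := option (vtx d * vtx d).

(* coefficients of X_v, by recursion on the level n = lvl v:
   X_0 = X_0, X_v = alpha_{|p(v)|} * sum_{u in p(v)} (X_u + W_{u->v}),
   with alpha_i = 1/i (critical case). *)
Fixpoint xcoef (R : unitRingType) d (n : nat) (v : vtx d) (s : src d) : R :=
  match n with
  | 0 => (s == None)%:R
  | n'.+1 => ((size (parents v))%:R)^-1 *
             \sum_(u <- parents v) (xcoef R n' u s + (s == Some (u, v))%:R)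
  end.


Definition X {R : unitRingType} d (v : vtx d) : src d -> R := @xcoef R d (lvl v) v.

(* Variance of a linear combination f of the independent N(0,1) sources whose
   support lies among X_0 and the W_{u->v} with lvl v <= t:
   Var = sum of the squared coefficients. *)
Definition gvar {R : ringType} (d : nat) (t : nat) (f : src d -> R) : R :=
  f None ^+ 2 +
  \sum_(1 <= s < t.+1) \sum_(v <- levelset d s) \sum_(u <- parents v)
     f (Some (u, v)) ^+ 2.

(* ---------- The random chain Gamma ----------
   dpaths n x = all possible trajectories x = x_0, x_1, ..., x_n = 0 of the
   chain started at x (lvl x = n), each step x_{k+1} in p(x_k). *)
Fixpoint dpaths d (n : nat) (x : vtx d) : seq (seq (vtx d)) :=
  match n with
  | 0 => [:: [:: x]]
  | n'.+1 => flatten [seq [seq x :: p | p <- dpaths n' y] | y <- parents x]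
  end.

Fixpoint pathprob {R : unitRingType} d (p : seq (vtx d)) : R :=
  match p with
  | x :: ((_ :: _) as q) => ((size (parents x))%:R)^-1 * pathprob q
  | _ => 1
  end.

Definition visitprob {R : unitRingType} d (t : nat) (c : vtx d -> R) (w : vtx d) : R :=
  \sum_(u <- levelset d t) c u *
    \sum_(p <- @dpaths d t u) pathprob p * (w \in p)%:R.

From mathcomp Require Import all_boot all_order all_algebra.
From mathcomp Require Import zify ring.
Import Order.TTheory GRing.Theory Num.Theory.
Set Implicit Arguments. Unset Strict Implicit. Unset Printing Implicit Defensive.
Local Open Scope ring_scope.

(* Since alpha_i = 1/i, X_x is an average over its parents, and
   induction on the level shows that the coefficient of X_0 in X_x is 1 while
   the coefficient of W_{u->v} is P_x(v in Gamma) / |p(v)|, where P_x is the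
   law of the chain started at x.  Averaging over the start gives the same
   formulas for zeta, so
     Var zeta = 1 + sum_{v <> 0} P(v in Gamma)^2 / |p(v)|,
   and the bound follows from |p(v)| <= d + 1 and P(0 in Gamma) = 1. *)

Section Poset.
Variable d : nat.
Implicit Types (v w x y : vtx d) (p : seq (vtx d)).

Lemma lvl_ge v i : (v i <= lvl v)%N.
Proof. by rewrite /lvl (bigD1 i) //= leq_addr. Qed.

Lemma lvl_dec v i : (0 < v i)%N -> lvl (dec v i) = (lvl v).-1.
Proof.
move=> vi_gt0; rewrite /lvl (bigD1 i) // [in RHS](bigD1 i) //= ffunE eqxx.
rewrite (eq_bigr (fun j => v j)); last by move=> j /negbTE ji; rewrite ffunE ji.
by case: (v i) vi_gt0 => // m _; rewrite addSn.
Qed.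

Lemma mem_parents v y : y \in parents v -> exists2 i, (0 < v i)%N & y = dec v i.
Proof. by case/mapP=> i; rewrite mem_filter => /andP[vi_gt0 _] ->; exists i. Qed.

Lemma lvl_parents v y : y \in parents v -> lvl y = (lvl v).-1.
Proof. by case/mem_parents=> i vi_gt0 ->; rewrite lvl_dec. Qed.

Lemma lvl_parents_gt0 v y : y \in parents v -> (0 < lvl v)%N.
Proof. by case/mem_parents=> i vi_gt0 _; apply: leq_trans vi_gt0 (lvl_ge v i). Qed.

Lemma size_parents_gt0 v : (0 < lvl v)%N -> (0 < size (parents v))%N.
Proof.
move=> lv_gt0; rewrite size_map size_filter -has_count.
case: (pickP (fun i => 0 < v i)%N) => [i vi_gt0 | v_eq0].
  by apply/hasP; exists i; rewrite ?mem_enum.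
move: lv_gt0; rewrite /lvl big1 // => i _; move: (v_eq0 i) => /= /negbT; lia.
Qed.

Lemma size_parents_le v : (size (parents v) <= d.+1)%N.
Proof. by rewrite size_map size_filter (leq_trans (count_size _ _)) ?size_enum_ord. Qed.

Lemma uniq_parents v : uniq (parents v).
Proof.
rewrite map_inj_in_uniq; first exact/filter_uniq/enum_uniq.
move=> i j; rewrite !mem_filter => /andP[vi_gt0 _] _ /ffunP /(_ i).
by rewrite !ffunE eqxx; case: eqP => [->|_] //; lia.
Qed.

Lemma lvl_levelset s v : v \in levelset d s -> lvl v = s.
Proof.
case/mapP=> f; rewrite mem_filter => /andP[/eqP f_sum _] ->.
by rewrite /lvl; under eq_bigr do rewrite ffunE.
Qed.

Lemma size_levelset0 : (size (levelset d 0) <= 1)%N.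
Proof.
rewrite size_map size_filter (leq_trans (count_size _ _)) //.
by rewrite -cardE cardsT card_ffun card_ord exp1n.
Qed.

Lemma lvl_eq0_inj v w : lvl v = 0%N -> lvl w = 0%N -> v = w.
Proof.
move=> /eqP + /eqP; rewrite /lvl !sum_nat_eq0 => /forallP v0 /forallP w0.
by apply/ffunP => i; move: (v0 i) (w0 i) => /= /eqP -> /eqP ->.
Qed.

Lemma dpaths_head n x p : p \in dpaths n x -> exists q, p = x :: q.
Proof.
case: n => [|n] /=; first by rewrite mem_seq1 => /eqP ->; exists [::].
by case/flatten_mapP=> y _ /mapP[q _ ->]; exists q.
Qed.

Lemma mem_dpathsS n x p :
  p \in dpaths n.+1 x -> exists2 y, y \in parents x & exists2 q, q \in dpaths n y & p = x :: q.
Proof. by case/flatten_mapP=> y xy /mapP[q yq ->]; exists y => //; exists q. Qed.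

Lemma lvl_mem_dpaths n x p w :
  lvl x = n -> p \in dpaths n x -> w \in p -> (lvl w <= n)%N.
Proof.
elim: n x p => [|n IH] x p lx.
  by rewrite mem_seq1 => /eqP ->; rewrite mem_seq1 => /eqP ->; rewrite lx.
case/mem_dpathsS=> y xy [q yq ->]; rewrite in_cons => /predU1P[->|wq].
  by rewrite lx.
by apply/leqW/(IH y q _ yq wq); rewrite (lvl_parents xy) lx.
Qed.

Lemma lvl0_mem_dpaths n x p w :
  lvl x = n -> p \in dpaths n x -> lvl w = 0%N -> w \in p.
Proof.
elim: n x p => [|n IH] x p lx.
  by rewrite mem_seq1 => /eqP -> lw; rewrite (lvl_eq0_inj lw lx) mem_seq1.
case/mem_dpathsS=> y xy [q yq ->] lw; rewrite in_cons; apply/orP; right.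
by apply: (IH y) yq lw; rewrite (lvl_parents xy) lx.
Qed.

Lemma big_dpathsS (R : Type) (idx : R) (op : Monoid.law idx) n x
    (F : seq (vtx d) -> R) :
  \big[op/idx]_(p <- dpaths n.+1 x) F p =
  \big[op/idx]_(y <- parents x) \big[op/idx]_(p <- dpaths n y) F (x :: p).
Proof. by rewrite /= big_flatten big_map; apply: eq_bigr => y _; rewrite big_map. Qed.

End Poset.

Lemma sum_eq_indicator (R : pzSemiRingType) (T : eqType) (r : seq T) (a : T) :
  uniq r -> a \in r -> \sum_(b <- r) ((b == a)%:R : R) = 1.
Proof.
move=> r_uniq ar; rewrite (big_rem a ar) /= eqxx big1_seq ?addr0 // => b /andP[_ br].
by case: eqP br => // ->; rewrite mem_rem_uniqF.
Qed.

Section HittingProbability.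
Variables (R : numFieldType) (d : nat).
Implicit Types (w x y : vtx d).
Local Notation k x := ((size (parents x))%:R : R).

Definition hitprob n x w : R := \sum_(p <- dpaths n x) pathprob p * (w \in p)%:R.

Lemma visitprobE t (c : vtx d -> R) w :
  visitprob t c w = \sum_(u <- levelset d t) c u * hitprob t u w.
Proof. by []. Qed.

Lemma nparents_neq0 x : (0 < lvl x)%N -> k x != 0.
Proof. by move=> lx_gt0; rewrite pnatr_eq0 -lt0n size_parents_gt0. Qed.

Lemma sum_nparentsV x : (0 < lvl x)%N -> \sum_(y <- parents x) (k x)^-1 = 1.
Proof.
move=> lx_gt0.
by rewrite big_const_seq count_predT iter_addr_0 -(mulr_natr (k x)^-1) mulVf ?nparents_neq0.
Qed.

Lemma pathprob_cons n x y p : p \in dpaths n y ->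
  pathprob (R := R) (x :: p) = (k x)^-1 * pathprob p.
Proof. by case/dpaths_head=> q ->. Qed.

Lemma sum_pathprob n x : lvl x = n -> \sum_(p <- dpaths n x) pathprob (R := R) p = 1.
Proof.
elim: n x => [|n IH] x lx; first by rewrite /= big_seq1.
rewrite big_dpathsS -[RHS](sum_nparentsV (x := x)) ?lx //.
apply: eq_big_seq => y xy; rewrite big_seq.
under eq_bigr => p yp do rewrite (pathprob_cons _ yp).
by rewrite -big_seq -mulr_sumr IH ?mulr1 // (lvl_parents xy) lx.
Qed.

Lemma hitprob_sure n x w :
  lvl x = n -> (forall p, p \in dpaths n x -> w \in p) -> hitprob n x w = 1.
Proof.
move=> lx w_in; rewrite /hitprob -[RHS](sum_pathprob lx).
by apply: eq_big_seq => p /w_in ->; rewrite mulr1.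
Qed.

Lemma hitprob_self n x : lvl x = n -> hitprob n x x = 1.
Proof.
by move=> lx; apply: hitprob_sure => // p /dpaths_head[q ->]; rewrite mem_head.
Qed.

Lemma hitprob_lvl0 n x w : lvl x = n -> lvl w = 0%N -> hitprob n x w = 1.
Proof. by move=> lx lw; apply: hitprob_sure => // p /lvl0_mem_dpaths; apply. Qed.

Lemma hitprob_high n x w : lvl x = n -> (n < lvl w)%N -> hitprob n x w = 0.
Proof.
move=> lx lw; rewrite /hitprob big1_seq // => p /andP[_ xp].
case wp: (w \in p); last by rewrite mulr0.
by move: (lvl_mem_dpaths lx xp wp); lia.
Qed.

Lemma hitprobS n x w : lvl x = n.+1 -> w != x ->
  hitprob n.+1 x w = (k x)^-1 * \sum_(y <- parents x) hitprob n y w.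
Proof.
move=> lx wx; rewrite /hitprob big_dpathsS mulr_sumr; apply: eq_bigr => y _.
rewrite mulr_sumr big_seq [RHS]big_seq; apply: eq_bigr => p yp.
by rewrite (pathprob_cons _ yp) in_cons (negbTE wx) mulrA.
Qed.

End HittingProbability.

Section Coefficients.
Variables (R : numFieldType) (d : nat).
Implicit Types (u v x y : vtx d).
Local Notation k x := ((size (parents x))%:R : R).

Lemma xcoef_None n x : lvl x = n -> xcoef R n x None = 1.
Proof.
elim: n x => [|n IH] x lx //=; rewrite -[RHS](sum_nparentsV R (x := x)) ?lx //.
rewrite mulr_sumr; apply: eq_big_seq => y xy.
by rewrite IH ?addr0 ?mulr1 // (lvl_parents xy) lx.
Qed.

Lemma xcoef_Some n x u v : lvl x = n -> u \in parents v ->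
  xcoef R n x (Some (u, v)) = hitprob R n x v / k v.
Proof.
elim: n x => [|n IH] x lx uv.
  by rewrite hitprob_high ?mul0r // (lvl_parents_gt0 uv).
have ly y : y \in parents x -> lvl y = n by move/lvl_parents ->; rewrite lx.
rewrite /=; case: (eqVneq v x) => [v_eq_x | vx].
  subst v.
  (* W_{u->x} enters X_x directly, and no X_y with y below x depends on it *)
  rewrite hitprob_self // div1r -[RHS]mulr1; congr (_ * _).
  rewrite -[RHS](sum_eq_indicator R (uniq_parents x) uv); apply: eq_big_seq => y xy.
  rewrite (IH y (ly y xy) uv) (hitprob_high R (ly y xy)) ?lx // mul0r add0r.
  by congr (_ *+ nat_of_bool _); apply/eqP/eqP => [[->] | ->].
rewrite hitprobS // -mulrA mulr_suml; congr (_ * _); apply: eq_big_seq => y xy.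
rewrite (IH y (ly y xy) uv); case: eqP => [[_ v_eq_x] | _]; last exact: addr0.
by rewrite v_eq_x eqxx in vx.
Qed.

End Coefficients.

Lemma sum_sqr_even_split_ge (R : realFieldType) (T : Type) (r : seq T) (q : R) D :
  (0 < size r)%N -> (size r <= D)%N ->
  (D%:R)^-1 * q ^+ 2 <= \sum_(u <- r) (q / (size r)%:R) ^+ 2.
Proof.
move=> r_gt0 rD; rewrite big_const_seq count_predT iter_addr_0.
have n_gt0 : (0 : R) < (size r)%:R by rewrite ltr0n.
have -> : (q / (size r)%:R) ^+ 2 *+ size r = ((size r)%:R)^-1 * q ^+ 2.
  by rewrite -mulr_natr; field; rewrite gt_eqF.
apply: ler_wpM2r; first exact: sqr_ge0.
by rewrite lef_pV2 ?ler_nat // posrE ltr0n // (leq_trans r_gt0).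
Qed.

Theorem mainTheorem14 (R : realFieldType) (d t : nat) (c : vtx d -> R)
  (c_ge0 : forall u, u \in levelset d t -> 0 <= c u)
  (c_sum : \sum_(u <- levelset d t) c u = 1) :
  let zeta : src d -> R := fun s => \sum_(u <- levelset d t) c u * X u s in
  gvar t zeta >=
    (d.+1%:R)^-1 * \sum_(0 <= s < t.+1) \sum_(w <- levelset d s) visitprob t c w ^+ 2.
Proof.
cbv zeta; set zeta := (fun s : src d => _).
have zeta_None : zeta None = 1.
  by rewrite -c_sum; apply: eq_big_seq => x /lvl_levelset lx; rewrite /X xcoef_None ?mulr1.
have zeta_Some u v : u \in parents v ->
    zeta (Some (u, v)) = visitprob t c v / (size (parents v))%:R.
  move=> uv; rewrite visitprobE mulr_suml; apply: eq_big_seq => x /lvl_levelset lx.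
  by rewrite /X xcoef_Some // lx mulrA.
rewrite /gvar zeta_None big_ltn // mulrDr expr1n; apply: lerD.
  have visit_lvl0 w : w \in levelset d 0 -> visitprob t c w = 1.
    move=> /lvl_levelset lw; rewrite visitprobE -c_sum.
    by apply: eq_big_seq => u /lvl_levelset lu; rewrite hitprob_lvl0 ?mulr1.
  rewrite (eq_big_seq (fun _ => 1)) => [|w /visit_lvl0 ->]; last exact: expr1n.
  rewrite big_const_seq count_predT iter_addr_0 ler_pdivrMl ?ltr0n //.
  by rewrite mulr1 ler_nat (leq_trans (size_levelset0 d)).
rewrite mulr_sumr big_seq [leRHS]big_seq; apply: ler_sum => s /[!mem_index_iota] /andP[s_gt0 _].
rewrite mulr_sumr big_seq [leRHS]big_seq; apply: ler_sum => v /lvl_levelset lv.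
rewrite (eq_big_seq (fun=> (visitprob t c v / (size (parents v))%:R) ^+ 2)) => [|u /zeta_Some -> //].
by apply: sum_sqr_even_split_ge; rewrite ?size_parents_le ?size_parents_gt0 ?lv.
Qed.
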